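(* Consider an episode in which the first event is an original post with probability $\alpha\in[0,1]$ and a repost with probability $1-\alpha$, the number of segments is $1+S$ with $S\sim\mathrm{Pois}(\gamma)$, $\gamma\ge0$, the segments alternate in type (original-post segment, repost segment, ...) starting with the type of the first event, and, independently, each original-post segment contains $1+\mathrm{Pois}(\mu_1)$ events and each repost segment contains $1+\mathrm{Pois}(\mu_0)$ events ($\mu_1,\mu_0\ge0$). Then the expected total number of events in the episode equals $$\frac12(2+\mu_1+\mu_0)(\gamma+1)+c(\gamma,\alpha)(\mu_1-\mu_0),\qquad c(\gamma,\alpha)=e^{-\gamma}\Big(\alpha-\frac12\Big)\sum_{k=0}^\infty\frac{\gamma^{2k}}{(2k)!}.$$
   Context: An episode is a cluster of posts consisting of consecutive segments; a segment is a maximal run of events of the same type (original post or repost). *)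

From HB Require Import structures.
From mathcomp Require Import all_boot all_order all_algebra.
From mathcomp Require Import all_classical all_reals all_analysis.
Set Implicit Arguments. Unset Strict Implicit. Unset Printing Implicit Defensive.
Import Order.TTheory GRing.Theory Num.Theory.
Local Open Scope ring_scope.

Section Episode.
Variable R : realType.

Definition pois (l : R) (k : nat) : R := expR (- l) * l ^+ k / (k`!)%:R.

(* Outcome of an episode: (b, s) where b = true iff the first event is an
   original post, size s = 1 + S is the number of segments, and s`_i is the
   Poisson "extra" count of segment i (segment i has 1 + s`_i events). *)
Definition seg_type (b : bool) (i : nat) : bool := b (+) odd i.

Definition episode_pmf (alpha gamma mu1 mu0 : R) (w : bool * seq nat) : R :=
  let: (b, s) := w in
  if s is [::] then 0 else
  (if b then alpha else 1 - alpha) * pois gamma (size s).-1 *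
  \prod_(i < size s) pois (if seg_type b i then mu1 else mu0) (nth 0%N s i).

Definition episode_size (w : bool * seq nat) : nat := (size w.2 + sumn w.2)%N.

Definition expected_episode_size (alpha gamma mu1 mu0 : R) : \bar R :=
  \esum_(w in [set: bool * seq nat])
    (episode_pmf alpha gamma mu1 mu0 w * (episode_size w)%:R)%:E.

Definition c_coef (gamma alpha : R) : R :=
  expR (- gamma) * (alpha - 2^-1) *
  limn (fun n => \sum_(k < n) gamma ^+ (2 * k) / ((2 * k)`!)%:R).

End Episode.

(* Condition on the type b of the first event and on the number n + 1 of
   segments.  The segment sizes are then independent 1 + Pois(mu) variables
   with means alternating between mu1 and mu0, so the conditional mean size is
   (n + 1)(1 + (mu1 + mu0)/2), plus (mu1 - mu0)/2 with sign + (resp. -) for an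
   original post (resp. repost) when n + 1 is odd.  Averaging over
   n ~ Pois(gamma) uses E n = gamma and P(n even) = e^-gamma cosh gamma, and
   the series in c_coef is that of cosh gamma. *)

From HB Require Import structures.
From mathcomp Require Import all_boot all_order all_algebra.
From mathcomp Require Import all_classical all_reals all_analysis.
From mathcomp Require Import ring.
Import Order.TTheory GRing.Theory Num.Theory.
Import numFieldNormedType.Exports.
Local Open Scope ring_scope.
Local Open Scope classical_set_scope.

Section poisson_series.
Context {R : realType}.
Implicit Types (l c : R) (f : R^nat).

Lemma cvg_seriesMl c f l : series f @ \oo --> l ->
  series (fun k => c * f k) @ \oo --> c * l.
Proof.
have -> : series (fun k => c * f k) = (fun n => c * series f n).
  by apply/funext => n; rewrite /series /= mulr_sumr.
exact: cvgMl_tmp.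
Qed.

Lemma pois_ge0 l k : 0 <= l -> 0 <= pois l k.
Proof. by move=> l0; rewrite /pois divr_ge0 // mulr_ge0 ?expR_ge0 ?exprn_ge0. Qed.

Lemma poisE l k : pois l k = expR (- l) * exp_coeff l k.
Proof. by rewrite /pois /exp_coeff /= mulrA. Qed.

Lemma pois_mulS l k : pois l k.+1 * k.+1%:R = l * pois l k.
Proof.
rewrite /pois factS natrM exprS.
have k1 : 1 + k%:R != 0 :> R by rewrite addrC natr1 pnatr_eq0.
have kf : k`!%:R != 0 :> R by rewrite pnatr_eq0 -lt0n fact_gt0.
by field; rewrite kf k1.
Qed.

Lemma prod_pois_ge0 (m : nat -> R) n (s : seq nat) : (forall i, 0 <= m i) ->
  0 <= \prod_(i < n) pois (m i) (nth 0%N s i).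
Proof. by move=> m0; apply: prodr_ge0 => i _; apply: pois_ge0. Qed.

Lemma cvg_series_pois l : series (pois l) @ \oo --> (1 : R).
Proof.
have -> : pois l = fun k => expR (- l) * exp_coeff l k.
  by apply/funext => k; rewrite poisE.
rewrite -(expRxMexpNx_1 l) mulrC.
exact/cvg_seriesMl/is_cvg_series_exp_coeff.
Qed.

Lemma cvg_series_pois_mean l : series (fun k => pois l k * k%:R) @ \oo --> l.
Proof.
rewrite -cvg_shiftS /=.
have -> : (fun n => series (fun k => pois l k * k%:R) n.+1) =
          series (fun k => l * pois l k).
  apply/funext => n; rewrite /series /= big_nat_recl // mulr0 add0r.
  by apply: eq_bigr => k _; rewrite pois_mulS.
by move: (cvg_series_pois l) => /(cvg_seriesMl l); rewrite mulr1.
Qed.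

Lemma exp_coeffDN c j :
  exp_coeff c j + exp_coeff (- c) j = 2 * (~~ odd j)%:R * exp_coeff c j.
Proof.
rewrite /exp_coeff /= exprNn -signr_odd.
by case: (odd j) => /=; rewrite ?expr1 ?expr0; ring.
Qed.

Lemma series_exp_coeffDN_double c n :
  series (fun j => exp_coeff c j + exp_coeff (- c) j) (2 * n)%N =
  2 * \sum_(k < n) c ^+ (2 * k) / ((2 * k)`!)%:R.
Proof.
elim: n => [|n IH]; first by rewrite /series /= big_ord0 big_geq // mulr0.
rewrite mulnS add2n !seriesSr IH big_ord_recr /= !exp_coeffDN.
by rewrite oddS oddM /= mulr0 mul0r addr0 /exp_coeff /=; ring.
Qed.

Lemma cvg_cosh_series c :
  \sum_(k < n) c ^+ (2 * k) / ((2 * k)`!)%:R @[n --> \oo] -->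
  (expR c + expR (- c)) / 2.
Proof.
have -> : (fun n => \sum_(k < n) c ^+ (2 * k) / ((2 * k)`!)%:R) =
  (fun n => 2^-1 * series (fun j => exp_coeff c j + exp_coeff (- c) j) (2 * n)%N).
  by apply/funext => n; rewrite series_exp_coeffDN_double mulKf ?pnatr_eq0.
have series_even : series (fun j => exp_coeff c j + exp_coeff (- c) j) (2 * n)%N
    @[n --> \oo] --> expR c + expR (- c).
  apply: (cvg_comp _ _ (@cvg_mulnl 2 isT)).
  by rewrite seriesD; apply: cvgD; exact: is_cvg_series_exp_coeff.
by rewrite mulrC; exact: cvgMl_tmp.
Qed.

Lemma cvg_series_pois_even l :
  series (fun j => pois l j * (~~ odd j)%:R) @ \oo -->
  expR (- l) / 2 * (expR l + expR (- l)).
Proof.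
have -> : (fun j => pois l j * (~~ odd j)%:R) =
          (fun j => expR (- l) / 2 * (exp_coeff l j + exp_coeff (- l) j)).
  by apply/funext => j; rewrite exp_coeffDN poisE; field.
apply: cvg_seriesMl; rewrite seriesD; apply: cvgD; exact: is_cvg_series_exp_coeff.
Qed.

Lemma c_coefE (gamma alpha : R) :
  c_coef gamma alpha =
  expR (- gamma) * (alpha - 2^-1) * ((expR gamma + expR (- gamma)) / 2).
Proof. by rewrite /c_coef (cvg_lim _ (cvg_cosh_series gamma)). Qed.

End poisson_series.

Section esum_facts.
Context {R : realType}.
Local Open Scope ereal_scope.

Lemma esumZl (T : choiceType) (I : set T) (a : T -> \bar R) (c : R) :
  (0 <= c)%R -> (forall i, 0 <= a i) ->
  \esum_(i in I) (c%:E * a i) = c%:E * \esum_(i in I) a i.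
Proof.
move=> c0 a0; rewrite /esum -ereal_supZl //; last first.
  apply/set0P; exists 0; exists set0; first exact: fsets_set0.
  by rewrite fsbig_set0.
congr ereal_sup; apply/seteqP; split => x /=.
- by case=> A fA <-; exists (\sum_(i \in A) a i); [exists A | rewrite ge0_mule_fsumr].
- by case=> y [A fA <-] <-; exists A => //; rewrite ge0_mule_fsumr.
Qed.

Lemma eseries_EFin (r : nat -> R) (l : R) : series r @ \oo --> l ->
  \sum_(n <oo) (r n)%:E = l%:E.
Proof.
move=> rl; have -> : (fun N => \sum_(0 <= n < N) (r n)%:E) = EFin \o series r.
  by apply/funext => N; rewrite /= sumEFin.
by rewrite EFin_lim ?(cvg_lim _ rl) //; exact: cvgP rl.
Qed.

Lemma esum_size_cons (T : choiceType) n (f : seq T -> \bar R) :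
  (forall s, 0 <= f s) ->
  \esum_(s in [set s : seq T | size s = n.+1]) f s =
  \esum_(x in [set: T]) \esum_(t in [set t : seq T | size t = n]) f (x :: t).
Proof.
move=> f0; have -> : [set s : seq T | size s = n.+1] =
    (fun p : T * seq T => p.1 :: p.2) @` ([set: T] `*` [set t | size t = n]).
  apply/seteqP; split => [[//|x t] /= [tn]|_ [[x t] [_ /= tn] <-]] /=.
    by exists (x, t).
  by rewrite tn.
rewrite esum_image; last by move=> [x t] [y u] _ _ /= [-> ->].
by rewrite esum_esum.
Qed.

Lemma esum_setT_bool (f : bool -> \bar R) : (forall b, 0 <= f b) ->
  \esum_(b in [set: bool]) f b = f true + f false.
Proof.
move=> f0; rewrite (esumID [set true]) // setTI.
have -> : [set: bool] `&` ~` [set true] = [set false].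
  by apply/seteqP; split => -[] //=; case.
by rewrite !esum_set1.
Qed.

End esum_facts.

Section poisson_esum.
Context {R : realType}.
Local Open Scope ereal_scope.

Lemma esum_pois_affine (l c : R) : (0 <= l)%R -> (0 <= c)%R ->
  \esum_(k in [set: nat]) (pois l k * (c + k%:R))%:E = (c + l)%:E.
Proof.
move=> l0 c0; rewrite -nneseries_esumT; last first.
  by move=> k; rewrite lee_fin mulr_ge0 ?pois_ge0 ?addr_ge0.
apply: eseries_EFin.
have -> : (fun k => pois l k * (c + k%:R))%R =
          (fun k => c * pois l k + pois l k * k%:R)%R.
  by apply/funext => k; rewrite mulrDr mulrC.
rewrite seriesD; apply: cvgD; last exact: cvg_series_pois_mean.
by move: (cvg_series_pois l) => /(cvg_seriesMl c); rewrite mulr1.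
Qed.

Lemma esum_prod_pois_sumn n (m : nat -> R) (a : R) :
  (forall i, 0 <= m i)%R -> (0 <= a)%R ->
  \esum_(s in [set s : seq nat | size s = n])
     ((\prod_(i < n) pois (m i) (nth 0%N s i)) * (a + (sumn s)%:R))%:E
  = (a + \sum_(i < n) m i)%:E.
Proof.
elim: n m a => [|n IH] m a m0 a0.
  have -> : [set s : seq nat | size s = 0%N] = [set [::]].
    by apply/seteqP; split => s /=; [move/size0nil | move=> ->].
  by rewrite esum_set1 /= ?big_ord0 ?mul1r ?addr0.
rewrite esum_size_cons; last first.
  by move=> s; rewrite lee_fin mulr_ge0 ?addr_ge0 ?prod_pois_ge0.
transitivity (\esum_(x in [set: nat])
  (pois (m 0%N) x * ((a + \sum_(i < n) m i.+1) + x%:R))%:E); last first.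
  by rewrite esum_pois_affine ?addr_ge0 ?sumr_ge0 // big_ord_recl addrAC addrA.
apply: eq_esum => x _.
rewrite [in RHS]addrAC EFinM -(IH (fun i => m i.+1)) ?addr_ge0 //.
rewrite -esumZl ?pois_ge0 //; last first.
  move=> t; rewrite lee_fin mulr_ge0 ?addr_ge0 //.
  exact: (prod_pois_ge0 (fun i => m i.+1)).
apply: eq_esum => t _; rewrite -EFinM big_ord_recl /= natrD.
by congr EFin; ring.
Qed.

End poisson_esum.

Section episode.
Context {R : realType}.
Variables alpha gamma mu1 mu0 : R.
Hypotheses (alpha_ge0 : 0 <= alpha) (alpha_le1 : alpha <= 1)
  (gamma_ge0 : 0 <= gamma) (mu1_ge0 : 0 <= mu1) (mu0_ge0 : 0 <= mu0).

Definition first_weight (b : bool) : R := if b then alpha else 1 - alpha.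
Definition seg_mean (b : bool) (i : nat) : R := if seg_type b i then mu1 else mu0.
Definition type_sign (b : bool) : R := if b then 1 else -1.

Lemma first_weight_ge0 b : 0 <= first_weight b.
Proof. by case: b; rewrite /= ?subr_ge0. Qed.

Lemma seg_mean_ge0 b i : 0 <= seg_mean b i.
Proof. by rewrite /seg_mean; case: ifP. Qed.

Lemma sum_seg_mean b n : \sum_(i < n) seg_mean b i =
  (n%:R * (mu1 + mu0) + type_sign b * (odd n)%:R * (mu1 - mu0)) / 2.
Proof.
elim: n => [|n IH]; first by rewrite big_ord0 /=; field.
rewrite big_ord_recr /= IH /seg_mean /seg_type -natr1 /type_sign.
by case: (b); case: (odd n) => /=; field.
Qed.

Lemma episode_pmf_cons b x t : episode_pmf alpha gamma mu1 mu0 (b, x :: t) =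
  first_weight b * pois gamma (size t) *
  \prod_(i < (size t).+1) pois (seg_mean b i) (nth 0%N (x :: t) i).
Proof. by []. Qed.

Lemma episode_pmf_ge0 w : 0 <= episode_pmf alpha gamma mu1 mu0 w.
Proof.
case: w => b [//|x t]; rewrite episode_pmf_cons.
apply: mulr_ge0; last exact/prod_pois_ge0/seg_mean_ge0.
exact/mulr_ge0/pois_ge0/gamma_ge0/first_weight_ge0.
Qed.

(* The last factor is the probability that the number of segments is odd. *)
Definition cond_mean_size (b : bool) : R :=
  (1 + (mu1 + mu0) / 2) * (gamma + 1) +
  type_sign b * (mu1 - mu0) / 2 *
  (expR (- gamma) / 2 * (expR gamma + expR (- gamma))).

Lemma cvg_series_episode_size b :
  series (fun n => first_weight b * pois gamma n *
    (n.+1%:R + \sum_(i < n.+1) seg_mean b i)) @ \oo -->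
  first_weight b * cond_mean_size b.
Proof.
have -> : (fun n => first_weight b * pois gamma n *
    (n.+1%:R + \sum_(i < n.+1) seg_mean b i)) =
  (fun n => first_weight b *
    ((1 + (mu1 + mu0) / 2) * (pois gamma n * n%:R + pois gamma n) +
     type_sign b * (mu1 - mu0) / 2 * (pois gamma n * (~~ odd n)%:R))).
  apply/funext => n; rewrite sum_seg_mean -natr1 /=.
  by case: (odd n) => /=; field.
apply: cvg_seriesMl; rewrite seriesD; apply: cvgD; apply: cvg_seriesMl.
- by rewrite seriesD; apply: cvgD; [exact: cvg_series_pois_mean|exact: cvg_series_pois].
- exact: cvg_series_pois_even.
Qed.

Local Open Scope ereal_scope.

Lemma esum_episode_size_length b n :
  \esum_(s in [set s : seq nat | size s = n.+1])
    (episode_pmf alpha gamma mu1 mu0 (b, s) * (episode_size (b, s))%:R)%:E =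
  (first_weight b * pois gamma n *
    (n.+1%:R + \sum_(i < n.+1) seg_mean b i))%:E.
Proof.
rewrite EFinM -(esum_prod_pois_sumn _ _ _ (seg_mean_ge0 b)) // -esumZl; last 2 first.
- exact/mulr_ge0/pois_ge0/gamma_ge0/first_weight_ge0.
- by move=> s; rewrite lee_fin mulr_ge0 //; apply/prod_pois_ge0/seg_mean_ge0.
apply: eq_esum => -[//|x t]; rewrite episode_pmf_cons => -[tn].
by rewrite -EFinM /episode_size /= tn natrD [in RHS]mulrA.
Qed.

Lemma esum_episode_size_first b :
  \esum_(s in [set: seq nat])
    (episode_pmf alpha gamma mu1 mu0 (b, s) * (episode_size (b, s))%:R)%:E =
  (first_weight b * cond_mean_size b)%:E.
Proof.
have term_ge0 s :
    0 <= (episode_pmf alpha gamma mu1 mu0 (b, s) * (episode_size (b, s))%:R)%:E.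
  by rewrite lee_fin mulr_ge0 ?episode_pmf_ge0.
have -> : [set: seq nat] = \bigcup_(n in [set: nat]) [set s | size s = n].
  by apply/seteqP; split => s // _; exists (size s).
rewrite esum_bigcupT //; last by move=> i j _ _ [s [/= <- <-]].
rewrite -nneseries_esumT; last by move=> n; apply: esum_ge0.
rewrite nneseries_recl //; last by move=> n _; apply: esum_ge0 => s _.
rewrite esum1; last by move=> s /= /size0nil ->; rewrite mul0r.
rewrite add0e -nneseries_addn; last by move=> n; apply: esum_ge0.
under eq_eseriesr do rewrite addn1 esum_episode_size_length.
exact/eseries_EFin/cvg_series_episode_size.
Qed.

End episode.

Theorem mainTheorem4 (R : realType) (alpha gamma mu1 mu0 : R)
  (halpha0 : 0 <= alpha) (halpha1 : alpha <= 1) (hgamma : 0 <= gamma)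
  (hmu1 : 0 <= mu1) (hmu0 : 0 <= mu0) :
  expected_episode_size alpha gamma mu1 mu0 =
  (2^-1 * (2 + mu1 + mu0) * (gamma + 1) + c_coef gamma alpha * (mu1 - mu0))%:E.
Proof.
have term_ge0 w : (0 <= (episode_pmf alpha gamma mu1 mu0 w * (episode_size w)%:R)%:E)%E.
  by rewrite lee_fin mulr_ge0 ?episode_pmf_ge0.
rewrite /expected_episode_size -setXTT.
transitivity (\esum_(b in [set: bool]) \esum_(s in [set: seq nat])
  (episode_pmf alpha gamma mu1 mu0 (b, s) * (episode_size (b, s))%:R)%:E).
  by rewrite esum_esum //; apply: eq_esum => -[b s].
rewrite esum_setT_bool; last by move=> b; apply: esum_ge0.
rewrite !esum_episode_size_first // -EFinD c_coefE; congr EFin.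
by rewrite /cond_mean_size /first_weight /type_sign; field.
Qed.
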